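(* Let $m>2$ be an integer and let $K$ be a field whose characteristic does not divide $m$ and which contains the $m$-th roots of unity. Let $a\in K^*$ be an element that is not an $m$-th power in $K$, and let $b\in K^*$. Then every $K$-rational automorphism $\psi$ of $\mathbb{P}^1_K$ that maps the set of roots in $\bar K$ of $x^m-a$ onto the set of roots in $\bar K$ of $x^m-b$ is of the form $x\mapsto cx$ or $x\mapsto c/x$ for some nonzero $c\in K$. *)

From HB Require Import structures.
From mathcomp Require Import all_boot all_order all_algebra.
Set Implicit Arguments. Unset Strict Implicit. Unset Printing Implicit Defensive.
Import GRing.Theory.
Local Open Scope ring_scope.

(* The projective line P^1 over a field L: [Some x] is the affine point x,
   [None] is the point at infinity. *)
Definition P1 (L : Type) := option L.

(* Action on P^1(L) of the Moebius transformation x |-> (al x + be)/(ga x + de),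
   i.e. of the class in PGL_2 of the matrix [[al, be], [ga, de]]
   (meaningful when al*de - be*ga != 0). *)
Definition mobius (L : fieldType) (al be ga de : L) (p : P1 L) : P1 L :=
  match p with
  | Some x => if ga * x + de == 0 then None
              else Some ((al * x + be) / (ga * x + de))
  | None => if ga == 0 then None else Some (al / ga)
  end.

From HB Require Import structures.
From mathcomp Require Import all_boot all_order all_algebra.
From mathcomp Require Import ring.
From Stdlib Require Import Classical.
Set Implicit Arguments.
Unset Strict Implicit.
Unset Printing Implicit Defensive.
Import GRing.Theory.
Local Open Scope ring_scope.

(* Let x be a root of X^m - a in L; it is not in K.  There is a nontrivial
   m-th root of unity w in K such that every polynomial relation of degree
   <= 2 over K satisfied by x is also satisfied by w x: if x is quadratic over
   K, its conjugate is another root of X^m - a (distinct from x because m is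
   invertible in K), hence equals w x; otherwise there is no such relation.
   For psi the Moebius map, z a primitive m-th root of unity and j < m,
   psi (z^j x) = z^k psi x for some k, as both are m-th roots of b; clearing
   denominators, this is a relation of degree <= 2 on x, so it also holds at
   w x.  Hence psi (w y) = nu psi y with
   nu := psi (w x) / psi x for the m >= 3 roots y = z^j x, a quadratic equation
   in y that must vanish identically.  Its extreme coefficients are
   A C w (1 - nu) and B D (1 - nu), and nu != 1 since psi is injective; so
   A C = B D = 0, leaving only x |-> c x and x |-> c / x. *)

Lemma horner_size_le3 (R : comNzRingType) (p : {poly R}) (x : R) :
  (size p <= 3)%N -> p.[x] = p`_0 + p`_1 * x + p`_2 * x ^+ 2.
Proof.
move=> /horner_coef_wide->.
by rewrite !big_ord_recr big_ord0 /= expr0 expr1 mulr1 add0r.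
Qed.

Lemma size3_coef2_neq0 (R : nzSemiRingType) (p : {poly R}) :
  size p = 3 -> p`_2 != 0.
Proof.
by move=> p3; have := lead_coef_eq0 p; rewrite lead_coefE p3 -size_poly_eq0 p3 => ->.
Qed.

Lemma root_quadratic_conj (F : fieldType) (p : {poly F}) (x : F) :
  size p = 3 -> root p x -> root p (- (p`_1 / p`_2) - x).
Proof.
move=> p3; have p2 := size3_coef2_neq0 p3.
rewrite !rootE !horner_size_le3 ?p3 // => /eqP px; apply/eqP; rewrite -[RHS]px.
by field.
Qed.

Section OutsideImage.

Variables (K L : fieldType) (f : {rmorphism K -> L}) (x : L).
Hypothesis x_notin : forall c : K, f c != x.

Lemma notin_image_neq0 : x != 0.
Proof. by rewrite eq_sym -(rmorph0 f) x_notin. Qed.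

Lemma map_poly_root_size_le2_eq0 (p : {poly K}) :
  (size p <= 2)%N -> root (map_poly f p) x -> p = 0.
Proof.
move=> p2; rewrite rootE (@horner_coef_wide _ 2) ?size_map_poly //.
rewrite !big_ord_recr big_ord0 /= !coef_map expr0 expr1 mulr1 add0r => /eqP px.
have p1 : p`_1 = 0.
  apply/eqP; apply: contraT => p1.
  have := x_notin (- p`_0 / p`_1); rewrite fmorph_div rmorphN.
  rewrite -[X in _ != X]divr1 eqr_div ?fmorph_eq0 ?oner_neq0 // mulr1.
  by rewrite eqr_oppLR mulrC -addr_eq0 px eqxx.
have p0 : p`_0 = 0.
  by apply/eqP; rewrite -(fmorph_eq0 f) -px p1 raddf0 mul0r addr0.
apply/polyP => -[|[|i]]; rewrite coef0 //.
by rewrite nth_default // (leq_trans p2).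
Qed.

Lemma map_poly_root_transfer (q p : {poly K}) (y : L) :
  size q = 3 -> root (map_poly f q) x -> root (map_poly f q) y ->
  root (map_poly f p) x -> root (map_poly f p) y.
Proof.
move=> q3 qx qy px.
have q0 : q != 0 by rewrite -size_poly_gt0 q3.
have r0 : p %% q = 0.
  apply: map_poly_root_size_le2_eq0; first by have := ltn_modpN0 p q0; rewrite q3.
  rewrite rootE; move: px; rewrite {1}(divp_eq p q) rmorphD rmorphM /= rootE.
  by rewrite !hornerE (rootP qx) mulr0 add0r.
by rewrite (divp_eq p q) r0 addr0 rmorphM rootM qy orbT.
Qed.

Variables (m : nat) (a : K).
Hypotheses (m_neq0 : m%:R != 0 :> K) (x_root : x ^+ m = f a).

Lemma sqr_notin_image_odd (d : K) : odd m -> x ^+ 2 != f d.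
Proof.
move=> m_odd; apply/eqP => x2; apply/(negP (x_notin (a / d ^+ m./2))).
rewrite fmorph_div rmorphXn -x_root -x2 -exprM mul2n.
rewrite -[in X in X / _](odd_double_half m) m_odd exprD expr1.
by rewrite mulfK ?expf_neq0 ?notin_image_neq0.
Qed.

Lemma root_quadratic_conj_neq (q : {poly K}) :
  size q = 3 -> root (map_poly f q) x -> - f (q`_1 / q`_2) - x != x.
Proof.
move=> q3 qx; apply/eqP => ex; set s := q`_1 / q`_2 in ex.
have q2 := size3_coef2_neq0 q3.
have sx : f s = - (2 * x) by rewrite -(opprK (f s)) -[- f s](subrK x) ex; ring.
(* A double root lies in K when 2 != 0; in characteristic 2 the linear
   coefficient vanishes and m is odd, so x ^+ 2 \in K would force x \in K. *)
have [two0 | two_neq0] := eqVneq (2 : K) 0; last first.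
  apply: (negP (x_notin (- s / 2))).
  rewrite fmorph_div rmorphN rmorph_nat sx opprK mulrC mulKf //.
  by rewrite -(rmorph_nat f) fmorph_eq0.
have q1 : q`_1 = 0.
  apply/eqP; rewrite -(mulIr_eq0 _ (mulIf (invr_neq0 q2))) -/s -(fmorph_eq0 f).
  by rewrite sx -(rmorph_nat f) two0 rmorph0 mul0r oppr0.
have m_odd : odd m.
  apply: contraTT m_neq0 => m_even.
  by rewrite -(odd_double_half m) (negbTE m_even) -muln2 natrM two0 mulr0 eqxx.
apply: (negP (sqr_notin_image_odd (- q`_0 / q`_2) m_odd)).
move: qx; rewrite rootE horner_size_le3 ?size_map_poly ?q3 // !coef_map q1 raddf0 mul0r.
rewrite addr0 fmorph_div rmorphN addrC addr_eq0 => /eqP e.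
by rewrite -e mulrC mulKf ?fmorph_eq0.
Qed.

Variable z : K.
Hypotheses (m_gt2 : (2 < m)%N) (z_prim : m.-primitive_root z).

Lemma exists_twisting_root_of_unity :
  exists2 w : K, w ^+ m = 1 /\ w != 1 &
    forall p : {poly K}, (size p <= 3)%N ->
      root (map_poly f p) x -> root (map_poly f p) (f w * x).
Proof.
case: (classic (exists2 q : {poly K},
                  q != 0 & (size q <= 3)%N && root (map_poly f q) x))
  => [[q q_neq0 /andP[q_le3 qx]] | no_rel]; last first.
  exists z.
    split; first exact: prim_expr_order.
    by rewrite -[z]expr1 -(prim_order_dvd z_prim) dvdn1; case: m m_gt2 => [|[|]].
  move=> p p_le3 px; suff -> : p = 0 by rewrite rmorph0 root0.
  by apply/eqP/contraT => p_neq0; case: no_rel; exists p; rewrite ?p_le3 ?px.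
have q3 : size q = 3.
  apply/eqP; rewrite eqn_leq q_le3 ltnNge; apply/negP => q_le2.
  by move: q_neq0; rewrite (map_poly_root_size_le2_eq0 q_le2 qx) eqxx.
set y := - f (q`_1 / q`_2) - x.
have qy : root (map_poly f q) y.
  by rewrite /y fmorph_div -!coef_map root_quadratic_conj ?size_map_poly.
have transfer := map_poly_root_transfer q3 qx qy.
have y_root : y ^+ m = f a.
  apply/eqP; rewrite -subr_eq0; move: (transfer ('X^m - a%:P)).
  rewrite rmorphB /= map_polyXn map_polyC /= !rootE !hornerE x_root subrr eqxx.
  by move=> /(_ isT).
have [i yx] : exists i, y = f z ^+ i * x.
  have z_prim' : m.-primitive_root (f z) by rewrite fmorph_primitive_root.
  have /(prim_rootP z_prim') [i yx] : (y / x) ^+ m = 1.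
    by rewrite expr_div_n y_root -x_root divff ?expf_neq0 ?notin_image_neq0.
  exists i.
  by rewrite -yx divfK ?notin_image_neq0.
exists (z ^+ i).
  split; first by rewrite exprAC (prim_expr_order z_prim) expr1n.
  apply: contra_neq (root_quadratic_conj_neq q3 qx) => zi1.
  by rewrite -/y yx -rmorphXn zi1 rmorph1 mul1r.
by move=> p _; rewrite rmorphXn -yx; apply: transfer.
Qed.

End OutsideImage.

Definition mobius_fun (F : fieldType) (A B C D x : F) := (A * x + B) / (C * x + D).

Lemma mobius_fun_inj (F : fieldType) (A B C D x y : F) :
  A * D - B * C != 0 -> C * x + D != 0 -> C * y + D != 0 ->
  mobius_fun A B C D x = mobius_fun A B C D y -> x = y.
Proof.
move=> det dx dy /eqP; rewrite /mobius_fun eqr_div // -subr_eq0 => /eqP e.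
have : (A * D - B * C) * (x - y) = 0 by rewrite -[RHS]e; ring.
by move/eqP; rewrite mulf_eq0 (negbTE det) subr_eq0 => /eqP.
Qed.

(* The numerator of psi (s x) - t psi x, for psi x = (A x + B) / (C x + D). *)
Definition twist_poly (R : comNzRingType) (A B C D s t : R) : {poly R} :=
  Poly [:: B * D * (1 - t); A * s * D + B * C - t * (A * D + B * C * s);
           A * C * s * (1 - t)].

Section TwistPoly.

Variables (R : comNzRingType) (A B C D s t : R).

Lemma size_twist_poly : (size (twist_poly A B C D s t) <= 3)%N.
Proof. exact: size_Poly. Qed.

Lemma horner_twist_poly x : (twist_poly A B C D s t).[x] =
  (A * (s * x) + B) * (C * x + D) - t * ((A * x + B) * (C * (s * x) + D)).
Proof. by rewrite horner_Poly /=; ring. Qed.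

Lemma map_twist_poly (S : comNzRingType) (f : {rmorphism R -> S}) :
  map_poly f (twist_poly A B C D s t) = twist_poly (f A) (f B) (f C) (f D) (f s) (f t).
Proof. by rewrite map_Poly /= !(rmorphB, rmorphD, rmorphM, rmorph1). Qed.

Lemma twist_poly_eq0 : twist_poly A B C D s t = 0 ->
  A * C * s * (1 - t) = 0 /\ B * D * (1 - t) = 0.
Proof.
by move=> /polyP e; split; [move: (e 2%N) | move: (e 0%N)]; rewrite coef_Poly coef0.
Qed.

End TwistPoly.

Lemma root_twist_poly (F : fieldType) (A B C D s t x : F) :
  C * x + D != 0 -> C * (s * x) + D != 0 ->
  root (twist_poly A B C D s t) x =
    (mobius_fun A B C D (s * x) == t * mobius_fun A B C D x).
Proof.
move=> dx dsx; rewrite rootE horner_twist_poly /mobius_fun [t * (_ / _)]mulrA.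
by rewrite eqr_div // subr_eq0 -[t * _ * _]mulrA.
Qed.

Section MobiusOnRoots.

Variables (K L : fieldType) (f : {rmorphism K -> L}).
Variables (m : nat) (a b al be ga de z w : K) (x : L).
Hypotheses (m_gt2 : (2 < m)%N) (z_prim : m.-primitive_root z).
Hypotheses (x_root : x ^+ m = f a) (x_neq0 : x != 0).
Hypotheses (w_root : w ^+ m = 1) (w_neq1 : w != 1).
Hypothesis w_twist : forall p : {poly K}, (size p <= 3)%N ->
  root (map_poly f p) x -> root (map_poly f p) (f w * x).
Hypotheses (b_neq0 : b != 0) (det_neq0 : al * de - be * ga != 0).
Hypothesis maps_roots : forall y : L, y ^+ m = f a ->
  exists2 y' : L, y' ^+ m = f b &
    mobius (f al) (f be) (f ga) (f de) (Some y) = Some y'.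

Let m_gt0 : (0 < m)%N := ltnW (ltnW m_gt2).
Let psi := mobius_fun (f al) (f be) (f ga) (f de).
Let Z := f z.
Let Z_prim : m.-primitive_root Z := etrans (fmorph_primitive_root f m z) z_prim.
Let W := f w.
Let nu := psi (W * x) / psi x.

Lemma mobius_root_image y : y ^+ m = f a ->
  f ga * y + f de != 0 /\ psi y ^+ m = f b.
Proof.
case/maps_roots => y' y'_root; rewrite /mobius; case: eqP => // /eqP dy [ey].
by rewrite /psi /mobius_fun ey.
Qed.

Lemma mobius_denom_neq0 y : y ^+ m = f a -> f ga * y + f de != 0.
Proof. by case/mobius_root_image. Qed.

Lemma mobius_root_image_neq0 y : y ^+ m = f a -> psi y != 0.
Proof.
move=> /mobius_root_image[_ psi_y]; apply: contra_neq b_neq0 => psi0.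
by apply: (fmorph_inj f); rewrite rmorph0 -psi_y psi0 expr0n gtn_eqF.
Qed.

Lemma Z_mul_root j y : y ^+ m = f a -> (Z ^+ j * y) ^+ m = f a.
Proof.
by move=> ya; rewrite exprMn exprAC (prim_expr_order Z_prim) expr1n ya mul1r.
Qed.

Lemma W_mul_root y : y ^+ m = f a -> (W * y) ^+ m = f a.
Proof. by move=> ya; rewrite exprMn -rmorphXn w_root rmorph1 ya mul1r. Qed.

Lemma mobius_mul_twist j : psi (W * (Z ^+ j * x)) = nu * psi (Z ^+ j * x).
Proof.
have Zx_root := Z_mul_root j x_root.
have [k psi_Zx] : exists k, psi (Z ^+ j * x) = Z ^+ k * psi x.
  have /(prim_rootP Z_prim) [k ek] : (psi (Z ^+ j * x) / psi x) ^+ m = 1.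
    rewrite expr_div_n (mobius_root_image Zx_root).2 (mobius_root_image x_root).2.
    by rewrite divff ?fmorph_eq0.
  by exists k; rewrite -ek divfK ?mobius_root_image_neq0.
have rel : root (map_poly f (twist_poly al be ga de (z ^+ j) (z ^+ k))) x.
  rewrite map_twist_poly !rmorphXn root_twist_poly ?mobius_denom_neq0 //.
  by rewrite -/psi psi_Zx.
have Wx_root := W_mul_root x_root.
have := w_twist (size_twist_poly _ _ _ _ _ _) rel.
rewrite map_twist_poly !rmorphXn.
rewrite root_twist_poly -/psi ?mobius_denom_neq0 ?Z_mul_root //.
rewrite mulrCA => /eqP->.
by rewrite psi_Zx /nu [RHS]mulrCA divfK ?mobius_root_image_neq0.
Qed.

Lemma twist_poly_at_roots_eq0 :
  twist_poly (f al) (f be) (f ga) (f de) W nu = 0.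
Proof.
apply: (@roots_geq_poly_eq0 _ _ [seq Z ^+ j * x | j <- iota 0 3]).
- apply/allP => _ /mapP [j _ ->].
  have Zx_root := Z_mul_root j x_root.
  by rewrite root_twist_poly -/psi ?mobius_mul_twist ?mobius_denom_neq0 ?W_mul_root.
- rewrite map_inj_in_uniq ?iota_uniq // => i j.
  rewrite !mem_iota !add0n => /andP[_ i_lt3] /andP[_ j_lt3] /(mulIf x_neq0) /eqP.
  rewrite (eq_prim_root_expr Z_prim).
  by rewrite !modn_small ?(leq_trans i_lt3) ?(leq_trans j_lt3) // => /eqP.
- by rewrite size_map size_iota size_twist_poly.
Qed.

Lemma twist_ratio_neq1 : nu != 1.
Proof.
apply: contra_neq w_neq1 => nu1; apply: (fmorph_inj f); rewrite rmorph1.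
apply: (mulIf x_neq0); rewrite mul1r.
apply: (@mobius_fun_inj _ (f al) (f be) (f ga) (f de)).
- by rewrite -!rmorphM -rmorphB fmorph_eq0.
- exact/mobius_denom_neq0/W_mul_root.
- exact: mobius_denom_neq0.
- by rewrite -/psi -[psi x]mul1r -nu1 divfK ?mobius_root_image_neq0.
Qed.

Lemma mobius_coef_products_eq0 : al * ga = 0 /\ be * de = 0.
Proof.
have nu1 : 1 - nu != 0 by rewrite subr_eq0 eq_sym twist_ratio_neq1.
have W0 : W != 0.
  by rewrite fmorph_eq0; move: (oner_neq0 K); rewrite -w_root expf_eq0 m_gt0.
have [/eqP coef2 /eqP coef0] := twist_poly_eq0 twist_poly_at_roots_eq0.
move: coef2 coef0; rewrite !mulf_eq0 (negbTE W0) (negbTE nu1) !orbF !fmorph_eq0.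
by move=> al_ga be_de; split; apply/eqP; rewrite mulf_eq0.
Qed.

End MobiusOnRoots.

Lemma mobius_diag (F : fieldType) (A D : F) :
  D != 0 -> mobius A 0 0 D =1 mobius (A / D) 0 0 1.
Proof.
move=> D0 [y|] /=; last by rewrite !eqxx.
by rewrite !mul0r !add0r (negbTE D0) oner_eq0 !addr0 divr1 mulrAC.
Qed.

Lemma mobius_antidiag (F : fieldType) (B C : F) :
  C != 0 -> mobius 0 B C 0 =1 mobius 0 (B / C) 1 0.
Proof.
move=> C0 [y|] /=; last by rewrite (negbTE C0) oner_eq0 !mul0r.
rewrite !mul0r !add0r !addr0 mul1r mulf_eq0 (negbTE C0) /=.
by case: eqP => // _; rewrite invfM mulrA.
Qed.

Lemma mobius_monomial (K L : fieldType) (f : {rmorphism K -> L}) (al be ga de : K) :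
  al * ga = 0 -> be * de = 0 -> al * de - be * ga != 0 ->
  exists2 c : K, c != 0 &
    (forall p, mobius (f al) (f be) (f ga) (f de) p = mobius (f c) 0 0 1 p) \/
    (forall p, mobius (f al) (f be) (f ga) (f de) p = mobius 0 (f c) 1 0 p).
Proof.
move=> /eqP; rewrite mulf_eq0 => /orP[/eqP-> | /eqP->] /eqP be_de.
  rewrite mul0r sub0r oppr_eq0 mulf_eq0 negb_or => /andP[be0 ga0].
  move: be_de; rewrite mulf_eq0 (negbTE be0) /= => /eqP->.
  exists (be / ga); first by rewrite mulf_neq0 ?invr_eq0.
  by right; rewrite !rmorph0 fmorph_div; apply: mobius_antidiag; rewrite fmorph_eq0.
rewrite mulr0 subr0 mulf_eq0 negb_or => /andP[al0 de0].
move: be_de; rewrite mulf_eq0 (negbTE de0) orbF => /eqP->.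
exists (al / de); first by rewrite mulf_neq0 ?invr_eq0.
by left; rewrite !rmorph0 fmorph_div; apply: mobius_diag; rewrite fmorph_eq0.
Qed.

Theorem lemma4p2 (K : fieldType) (L : closedFieldType) (iota : {rmorphism K -> L})
  (m : nat) (a b al be ga de : K) :
  (2 < m)%N ->
  (m%:R : K) != 0 ->
  (exists z : K, m.-primitive_root z) ->
  a != 0 ->
  ~ (exists y : K, y ^+ m = a) ->
  b != 0 ->
  al * de - be * ga != 0 ->
  (forall x : L, x ^+ m = iota a ->
     exists2 y : L, y ^+ m = iota b &
       mobius (iota al) (iota be) (iota ga) (iota de) (Some x) = Some y) ->
  (forall y : L, y ^+ m = iota b ->
     exists2 x : L, x ^+ m = iota a &
       mobius (iota al) (iota be) (iota ga) (iota de) (Some x) = Some y) ->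
  exists2 c : K, c != 0 &
    (forall p : P1 L,
       mobius (iota al) (iota be) (iota ga) (iota de) p
       = mobius (iota c) 0 0 1 p)
    \/
    (forall p : P1 L,
       mobius (iota al) (iota be) (iota ga) (iota de) p
       = mobius 0 (iota c) 1 0 p).
Proof.
(* a != 0 holds anyway, and only the inclusion of the roots of X^m - a into
   the preimage of those of X^m - b is needed. *)
move=> m_gt2 m_neq0 [z z_prim] _ not_pow b_neq0 det maps_roots _.
have [x x_root] : exists x : L, x ^+ m = iota a.
  have /closed_rootP [x] : size ('X^m - (iota a)%:P : {poly L}) != 1%N.
    by rewrite size_XnsubC ?eqSS -?lt0n // ltnW // ltnW.
  by rewrite rootE !hornerE subr_eq0 => /eqP; exists x.
have x_notin : forall c, iota c != x.
  move=> c; apply/eqP => cx; apply: not_pow; exists c.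
  by apply: (fmorph_inj iota); rewrite rmorphXn cx.
have [w [w_root w_neq1] w_twist] :=
  exists_twisting_root_of_unity x_notin m_neq0 x_root m_gt2 z_prim.
have [al_ga be_de] := mobius_coef_products_eq0 m_gt2 z_prim x_root
  (notin_image_neq0 x_notin) w_root w_neq1 w_twist b_neq0 det maps_roots.
exact: mobius_monomial.
Qed.
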